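(* Let $m\in\mathrm{Hol}(\mathbb{D})$ with $m(0)\neq0$, $\beta\in\mathbb{T}$, and $n\in\mathbb{N}$ such that $\beta^k\neq1$ for $k=1,\dots,n$. Let $T:\mathrm{Hol}(\mathbb{D})\to\mathrm{Hol}(\mathbb{D})$ be given by $(Tf)(z)=m(z)f(\beta z)$. Then for each $k=1,\dots,n$, there is no $f\in\mathrm{Hol}(\mathbb{D})$ with $\beta^km(0)f-Tf=e_k$; that is, $e_k\notin(\beta^km(0)\mathrm{Id}-T)\mathrm{Hol}(\mathbb{D})$.
   Context: $\mathbb{D}$ is the open unit disc, $\mathbb{T}$ the unit circle, $\mathrm{Hol}(\mathbb{D})$ the space of holomorphic functions on $\mathbb{D}$, and $e_k(z)=z^k$ for $k\in\mathbb{N}_0$. *)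

From Stdlib Require Import Reals.
From Coquelicot Require Import Coquelicot.
Open Scope C_scope.

Definition in_disc (z : C) : Prop := (Cmod z < 1)%R.

(* f ∈ Hol(D): complex differentiable at every point of D
   (Coquelicot's ex_derive over the AbsRing C, i.e. complex derivative).
   Functions are represented by total maps C -> C; only values on D matter. *)
Definition Hol (f : C -> C) : Prop := forall z : C, in_disc z -> ex_derive f z.

Definition e (k : nat) : C -> C := fun z => Cpow z k.

Definition Top (m : C -> C) (beta : C) (f : C -> C) : C -> C :=
  fun z => m z * f (beta * z).

(* Write c = m(0) and let f(w) = sum_n a_n w^n + O(|w|^(N+1)) be the Taylor expansion of f
   at 0.  If a_0 = ... = a_(j-1) = 0 then f(w) = a_j w^j + O(|w|^(j+1)), and since
   m(w) = c + O(|w|) the equation at a small real w = x becomes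
   c (beta^k - beta^j) a_j x^j - x^k = O(x^(j+1)).
   For j < k this forces a_j = 0, because c <> 0 and beta^(k-j) <> 1; so all a_j with j < k
   vanish, and for j = k the same estimate reads x^k = O(x^(k+1)), which is absurd.
   Holomorphy only provides a complex derivative at each point, so the Taylor expansion is
   derived from the Cauchy integral formula on circles, itself obtained by applying
   Goursat's lemma (proved by quadrisection) to the annulus between a small circle around
   the point and a circle around 0. *)

From Stdlib Require Import Reals Lra Lia.
From Coquelicot Require Import Coquelicot.
Open Scope R_scope.

Lemma Rabs_snd_le_Cmod (z : C) : Rabs (snd z) <= Cmod z.
Proof.
  pose proof (Rmax_Cmod z); pose proof (Rmax_r (Rabs (fst z)) (Rabs (snd z))); lra.
Qed.

Lemma Cmod_le_Rabs_sum (z : C) : Cmod z <= Rabs (fst z) + Rabs (snd z).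
Proof.
  unfold Cmod.
  pose proof (Rabs_pos (fst z)); pose proof (Rabs_pos (snd z)).
  rewrite <- (sqrt_pow2 (Rabs (fst z) + Rabs (snd z))) by lra.
  apply sqrt_le_1_alt.
  rewrite <- (pow2_abs (fst z)), <- (pow2_abs (snd z)). nra.
Qed.

Lemma Cmod_minus_sym (a b : C) : Cmod (a - b) = Cmod (b - a).
Proof.
  replace (b - a)%C with (- (a - b))%C by ring. now rewrite Cmod_opp.
Qed.

Lemma Cmod_triangle_inv (a b : C) : Cmod a - Cmod b <= Cmod (a - b).
Proof.
  pose proof (Cmod_triangle (a - b) b) as H.
  replace (a - b + b)%C with a in H by ring. lra.
Qed.

Lemma Cmod_triangle3 (a b c : C) : Cmod (a + (b + c)) <= Cmod a + Cmod b + Cmod c.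
Proof. pose proof (Cmod_triangle a (b + c)); pose proof (Cmod_triangle b c); lra. Qed.

Lemma Cmod_triangle4 (a b c d : C) :
  Cmod (a - b + (c - d)) <= Cmod a + Cmod b + Cmod c + Cmod d.
Proof.
  pose proof (Cmod_triangle (a - b) (c - d)).
  pose proof (Cmod_triangle a (- b)); pose proof (Cmod_triangle c (- d)).
  rewrite Cmod_opp in *. unfold Cminus in *. lra.
Qed.

Lemma Cmod_RtoC_mult (x : R) (z : C) : Cmod (x * z) = Rabs x * Cmod z.
Proof. now rewrite Cmod_mult, Cmod_R. Qed.

Lemma Cmod_RtoC_pow (x : R) (j : nat) : 0 <= x -> Cmod (x ^ j) = x ^ j.
Proof. intros Hx. now rewrite Cmod_pow, Cmod_R, Rabs_right by lra. Qed.

Lemma Ceq_of_Cmod_sub_le (u v : C) : (forall eps, 0 < eps -> Cmod (u - v) <= eps) -> u = v.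
Proof.
  intros H.
  assert (Z : (u - v)%C = 0%C).
  { apply Cmod_eq_0, Rle_antisym; [|apply Cmod_ge_0].
    apply Rle_plus_epsilon. intros eps Heps. rewrite Rplus_0_l. now apply H. }
  replace u with (u - v + v)%C by ring. rewrite Z. ring.
Qed.

(** * Complex-valued functions of a real variable *)

Definition CRInt (h : R -> C) (a b : R) : C :=
  (RInt (fun t => fst (h t)) a b, RInt (fun t => snd (h t)) a b).

Definition ex_CRInt (h : R -> C) (a b : R) : Prop :=
  ex_RInt (fun t => fst (h t)) a b /\ ex_RInt (fun t => snd (h t)) a b.

Definition CR_continuous (h : R -> C) (x : R) : Prop :=
  forall eps, 0 < eps -> exists del, 0 < del /\
    forall y, Rabs (y - x) < del -> Cmod (h y - h x) < eps.

Definition is_CR_derive (h : R -> C) (x : R) (d : C) : Prop :=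
  is_derive (fun y => fst (h y)) x (fst d) /\ is_derive (fun y => snd (h y)) x (snd d).

Lemma CR_continuous_iff (h : R -> C) (x : R) : CR_continuous h x <->
  continuity_pt (fun y => fst (h y)) x /\ continuity_pt (fun y => snd (h y)) x.
Proof.
  split.
  - intros H.
    assert (Hc : forall p : C -> R, (forall z, Rabs (p z) <= Cmod z) ->
              (forall u v, p (u - v)%C = p u - p v) -> continuity_pt (fun y => p (h y)) x).
    { intros p Hp Hlin eps Heps. destruct (H eps Heps) as [d [Hd Hy]].
      exists d; split; [exact Hd|]. intros y [_ Hy']. simpl in *. unfold R_dist in *.
      rewrite <- Hlin. eapply Rle_lt_trans; [apply Hp | now apply Hy]. }
    split; apply Hc; try apply re_le_Cmod; try apply Rabs_snd_le_Cmod;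
      intros; simpl; ring.
  - intros [H1 H2] eps Heps.
    destruct (H1 (eps / 2)) as [d1 [Hd1 P1]]; [lra|].
    destruct (H2 (eps / 2)) as [d2 [Hd2 P2]]; [lra|].
    exists (Rmin d1 d2); split; [now apply Rmin_pos|].
    intros y Hy. destruct (Req_dec y x) as [->|Hne].
    { replace (h x - h x)%C with (RtoC 0) by ring. rewrite Cmod_0. lra. }
    pose proof (Rmin_l d1 d2); pose proof (Rmin_r d1 d2).
    assert (Q1 : Rabs (fst (h y) - fst (h x)) < eps / 2).
    { apply P1. split; [split; [exact I | congruence] | simpl; unfold R_dist; lra]. }
    assert (Q2 : Rabs (snd (h y) - snd (h x)) < eps / 2).
    { apply P2. split; [split; [exact I | congruence] | simpl; unfold R_dist; lra]. }
    eapply Rle_lt_trans; [apply Cmod_le_Rabs_sum|]. simpl. unfold Rminus in *. lra.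
Qed.

Lemma CR_continuous_filter (h : R -> C) (x : R) : CR_continuous h x ->
  continuous (fun y => fst (h y)) x /\ continuous (fun y => snd (h y)) x.
Proof.
  rewrite CR_continuous_iff. intros [H1 H2]. split; now apply continuity_pt_filterlim.
Qed.

Lemma CR_continuous_const (c : C) (x : R) : CR_continuous (fun _ => c) x.
Proof. rewrite CR_continuous_iff. split; apply continuity_pt_const; intros ? ?; reflexivity. Qed.

Lemma CR_continuous_ext (h1 h2 : R -> C) (x : R) :
  (forall y, h1 y = h2 y) -> CR_continuous h1 x -> CR_continuous h2 x.
Proof.
  intros E H eps Heps. destruct (H eps Heps) as [del [Hdel P]].
  exists del; split; auto. intros y Hy. rewrite <- !E. now apply P.
Qed.

Lemma CR_continuous_plus (h1 h2 : R -> C) (x : R) :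
  CR_continuous h1 x -> CR_continuous h2 x -> CR_continuous (fun y => h1 y + h2 y)%C x.
Proof.
  rewrite !CR_continuous_iff. intros [A1 A2] [B1 B2]. simpl.
  split; now apply continuity_pt_plus.
Qed.

Lemma CR_continuous_minus (h1 h2 : R -> C) (x : R) :
  CR_continuous h1 x -> CR_continuous h2 x -> CR_continuous (fun y => h1 y - h2 y)%C x.
Proof.
  rewrite !CR_continuous_iff. intros [A1 A2] [B1 B2]. simpl.
  split; now apply continuity_pt_minus.
Qed.

Lemma CR_continuous_mult (h1 h2 : R -> C) (x : R) :
  CR_continuous h1 x -> CR_continuous h2 x -> CR_continuous (fun y => h1 y * h2 y)%C x.
Proof.
  rewrite !CR_continuous_iff. intros [A1 A2] [B1 B2]. simpl. split.
  - apply continuity_pt_minus; now apply continuity_pt_mult.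
  - apply continuity_pt_plus; now apply continuity_pt_mult.
Qed.

Lemma CR_continuous_pow (h : R -> C) (x : R) (n : nat) :
  CR_continuous h x -> CR_continuous (fun y => h y ^ n)%C x.
Proof.
  intros H. induction n as [|n IH]; simpl.
  - apply CR_continuous_const.
  - now apply CR_continuous_mult.
Qed.

Lemma CR_continuous_Cmod (h : R -> C) (x : R) :
  CR_continuous h x -> continuity_pt (fun y => Cmod (h y)) x.
Proof.
  intros H eps Heps. destruct (H eps Heps) as [d [Hd P]]. exists d; split; auto.
  intros y [_ Hy]. simpl in *. unfold R_dist in *. specialize (P y Hy).
  apply Rabs_lt_between'.
  pose proof (Cmod_triangle_inv (h y) (h x)) as H1.
  pose proof (Cmod_triangle_inv (h x) (h y)) as H2.
  rewrite Cmod_minus_sym in H2. lra.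
Qed.

Lemma is_CR_derive_continuous (h : R -> C) (x : R) (d : C) :
  is_CR_derive h x d -> CR_continuous h x.
Proof.
  intros [H1 H2]. rewrite CR_continuous_iff.
  split; apply continuity_pt_filterlim;
    apply (ex_derive_continuous (K := R_AbsRing) (V := R_NormedModule)); eexists; eauto.
Qed.

Lemma is_CR_derive_const (c : C) (x : R) : is_CR_derive (fun _ => c) x 0.
Proof. split; apply (is_derive_const (K := R_AbsRing) (V := R_NormedModule)). Qed.

Lemma is_CR_derive_plus (h1 h2 : R -> C) (x : R) (d1 d2 : C) :
  is_CR_derive h1 x d1 -> is_CR_derive h2 x d2 ->
  is_CR_derive (fun y => h1 y + h2 y)%C x (d1 + d2).
Proof.
  intros [A1 A2] [B1 B2].
  split; apply (is_derive_plus (K := R_AbsRing) (V := R_NormedModule)); assumption.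
Qed.

Lemma is_CR_derive_mult (h1 h2 : R -> C) (x : R) (d1 d2 : C) :
  is_CR_derive h1 x d1 -> is_CR_derive h2 x d2 ->
  is_CR_derive (fun y => h1 y * h2 y)%C x (d1 * h2 x + h1 x * d2).
Proof.
  intros [A1 A2] [B1 B2].
  assert (M : forall n m : R_AbsRing, mult n m = mult m n) by (intros; apply Rmult_comm).
  split; simpl.
  - pose proof (is_derive_minus (K := R_AbsRing) (V := R_NormedModule) _ _ _ _ _
      (is_derive_mult _ _ _ _ _ A1 B1 M) (is_derive_mult _ _ _ _ _ A2 B2 M)) as P.
    simpl in P. unfold minus, plus, opp, mult in P; simpl in P.
    replace (fst d1 * fst (h2 x) - snd d1 * snd (h2 x)
             + (fst (h1 x) * fst d2 - snd (h1 x) * snd d2))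
      with (fst d1 * fst (h2 x) + fst (h1 x) * fst d2
            + - (snd d1 * snd (h2 x) + snd (h1 x) * snd d2)) by ring.
    exact P.
  - pose proof (is_derive_plus (K := R_AbsRing) (V := R_NormedModule) _ _ _ _ _
      (is_derive_mult _ _ _ _ _ A1 B2 M) (is_derive_mult _ _ _ _ _ A2 B1 M)) as P.
    simpl in P. unfold plus, mult in P; simpl in P.
    replace (fst d1 * snd (h2 x) + snd d1 * fst (h2 x)
             + (fst (h1 x) * snd d2 + snd (h1 x) * fst d2))
      with (fst d1 * snd (h2 x) + fst (h1 x) * snd d2
            + (snd d1 * fst (h2 x) + snd (h1 x) * fst d2)) by ring.
    exact P.
Qed.

Lemma is_CR_derive_affine_primitive (al be : C) (h : R -> C) (x : R) (dh : C) :
  is_CR_derive h x dh ->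
  is_CR_derive (fun y => al * h y + be * RtoC (/ 2) * (h y * h y))%C x ((al + be * h x) * dh)%C.
Proof.
  intros H.
  assert (D := is_CR_derive_plus _ _ x _ _
    (is_CR_derive_mult _ _ x _ _ (is_CR_derive_const al x) H)
    (is_CR_derive_mult _ _ x _ _ (is_CR_derive_const (be * RtoC (/ 2)) x)
       (is_CR_derive_mult _ _ x _ _ H H))).
  replace ((al + be * h x) * dh)%C
    with (0 * h x + al * dh + (0 * (h x * h x) + be * RtoC (/ 2) * (dh * h x + h x * dh)))%C;
    [exact D|].
  apply injective_projections; simpl; field.
Qed.

Lemma ex_CRInt_continuous (h : R -> C) (a b : R) : a <= b ->
  (forall x, a <= x <= b -> CR_continuous h x) -> ex_CRInt h a b.
Proof.
  intros Hab H.
  split; apply (ex_RInt_continuous (V := R_CompleteNormedModule)); intros z Hz;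
    rewrite Rmin_left, Rmax_right in Hz by lra; apply (CR_continuous_filter h z (H z Hz)).
Qed.

Lemma CRInt_ext (h1 h2 : R -> C) (a b : R) :
  (forall x, Rmin a b < x < Rmax a b -> h1 x = h2 x) -> CRInt h1 a b = CRInt h2 a b.
Proof. intros H. unfold CRInt. f_equal; apply RInt_ext; intros x Hx; now rewrite H. Qed.

Lemma ex_CRInt_ext (h1 h2 : R -> C) (a b : R) :
  (forall x, h1 x = h2 x) -> ex_CRInt h1 a b -> ex_CRInt h2 a b.
Proof.
  intros E [H1 H2].
  split; [eapply ex_RInt_ext, H1 | eapply ex_RInt_ext, H2]; intros; cbv beta; now rewrite E.
Qed.

Lemma CRInt_const (c : C) (a b : R) : CRInt (fun _ => c) a b = ((b - a) * c)%C.
Proof.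
  unfold CRInt. rewrite !RInt_const.
  apply injective_projections; simpl; unfold scal; simpl; unfold mult; simpl; ring.
Qed.

Lemma CRInt_plus (h1 h2 : R -> C) (a b : R) : ex_CRInt h1 a b -> ex_CRInt h2 a b ->
  CRInt (fun t => h1 t + h2 t)%C a b = (CRInt h1 a b + CRInt h2 a b)%C.
Proof.
  intros [H1 H2] [H3 H4]. unfold CRInt, Cplus; simpl.
  f_equal; now apply (RInt_plus (V := R_CompleteNormedModule)).
Qed.

Lemma ex_CRInt_plus (h1 h2 : R -> C) (a b : R) : ex_CRInt h1 a b -> ex_CRInt h2 a b ->
  ex_CRInt (fun t => h1 t + h2 t)%C a b.
Proof.
  intros [H1 H2] [H3 H4].
  split; now apply (ex_RInt_plus (V := R_CompleteNormedModule)).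
Qed.

Lemma CRInt_scal (c : C) (h : R -> C) (a b : R) : ex_CRInt h a b ->
  CRInt (fun t => c * h t)%C a b = (c * CRInt h a b)%C.
Proof.
  intros [H1 H2]. unfold CRInt, Cmult; simpl. f_equal.
  - rewrite (RInt_ext (V := R_CompleteNormedModule) _
      (fun t => minus (scal (fst c) (fst (h t))) (scal (snd c) (snd (h t))))) by reflexivity.
    rewrite (RInt_minus (V := R_CompleteNormedModule))
      by now apply (ex_RInt_scal (V := R_CompleteNormedModule)).
    now rewrite !(RInt_scal (V := R_CompleteNormedModule)).
  - rewrite (RInt_ext (V := R_CompleteNormedModule) _
      (fun t => plus (scal (fst c) (snd (h t))) (scal (snd c) (fst (h t))))) by reflexivity.
    rewrite (RInt_plus (V := R_CompleteNormedModule))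
      by now apply (ex_RInt_scal (V := R_CompleteNormedModule)).
    now rewrite !(RInt_scal (V := R_CompleteNormedModule)).
Qed.

Lemma ex_CRInt_scal (c : C) (h : R -> C) (a b : R) : ex_CRInt h a b ->
  ex_CRInt (fun t => c * h t)%C a b.
Proof.
  intros [H1 H2]. split; simpl.
  - apply (ex_RInt_ext (V := R_CompleteNormedModule)
      (fun t => minus (scal (fst c) (fst (h t))) (scal (snd c) (snd (h t))))); [reflexivity|].
    apply (ex_RInt_minus (V := R_CompleteNormedModule));
      now apply (ex_RInt_scal (V := R_CompleteNormedModule)).
  - apply (ex_RInt_ext (V := R_CompleteNormedModule)
      (fun t => plus (scal (fst c) (snd (h t))) (scal (snd c) (fst (h t))))); [reflexivity|].
    apply (ex_RInt_plus (V := R_CompleteNormedModule));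
      now apply (ex_RInt_scal (V := R_CompleteNormedModule)).
Qed.

Lemma ex_CRInt_minus (h1 h2 : R -> C) (a b : R) : ex_CRInt h1 a b -> ex_CRInt h2 a b ->
  ex_CRInt (fun t => h1 t - h2 t)%C a b.
Proof.
  intros H1 H2. destruct (ex_CRInt_plus _ _ a b H1 (ex_CRInt_scal (-1) h2 a b H2)) as [E1 E2].
  split; [eapply ex_RInt_ext, E1 | eapply ex_RInt_ext, E2]; intros; simpl; ring.
Qed.

Lemma CRInt_minus (h1 h2 : R -> C) (a b : R) : ex_CRInt h1 a b -> ex_CRInt h2 a b ->
  CRInt (fun t => h1 t - h2 t)%C a b = (CRInt h1 a b - CRInt h2 a b)%C.
Proof.
  intros H1 H2.
  rewrite (CRInt_ext _ (fun t => h1 t + (-1) * h2 t)%C) by (intros; ring).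
  rewrite CRInt_plus, CRInt_scal by auto using ex_CRInt_scal. ring.
Qed.

Lemma CRInt_Chasles (h : R -> C) (a b c : R) : ex_CRInt h a b -> ex_CRInt h b c ->
  (CRInt h a b + CRInt h b c)%C = CRInt h a c.
Proof.
  intros [H1 H2] [H3 H4]. unfold CRInt, Cplus; simpl.
  f_equal; now apply (RInt_Chasles (V := R_CompleteNormedModule)).
Qed.

Lemma ex_CRInt_sum_n (F : nat -> R -> C) (N : nat) (a b : R) :
  (forall n, ex_CRInt (F n) a b) -> ex_CRInt (fun t => sum_n (fun n => F n t) N) a b.
Proof.
  intros H. induction N as [|N IH].
  - apply (ex_CRInt_ext (F 0%nat)); [intros; now rewrite sum_O | apply H].
  - apply (ex_CRInt_ext (fun t => sum_n (fun n => F n t) N + F (S N) t)%C);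
      [intros; now rewrite sum_Sn | now apply ex_CRInt_plus].
Qed.

Lemma CRInt_sum_n (F : nat -> R -> C) (N : nat) (a b : R) : (forall n, ex_CRInt (F n) a b) ->
  CRInt (fun t => sum_n (fun n => F n t) N) a b = sum_n (fun n => CRInt (F n) a b) N.
Proof.
  intros H. induction N as [|N IH].
  - rewrite sum_O. apply CRInt_ext. intros; now rewrite sum_O.
  - rewrite sum_Sn, <- IH, <- CRInt_plus by auto using ex_CRInt_sum_n.
    apply CRInt_ext. intros; now rewrite sum_Sn.
Qed.

(* The factor 2 comes from estimating the real and imaginary parts separately. *)
Lemma CRInt_norm_le (h : R -> C) (a b M : R) : a <= b -> ex_CRInt h a b ->
  (forall t, a <= t <= b -> Cmod (h t) <= M) -> Cmod (CRInt h a b) <= 2 * (b - a) * M.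
Proof.
  intros Hab [H1 H2] HM.
  eapply Rle_trans; [apply Cmod_le_Rabs_sum|]. unfold CRInt; simpl.
  assert (A1 : Rabs (RInt (fun t => fst (h t)) a b) <= (b - a) * M).
  { apply abs_RInt_le_const; auto. intros t Ht.
    eapply Rle_trans; [apply re_le_Cmod | auto]. }
  assert (A2 : Rabs (RInt (fun t => snd (h t)) a b) <= (b - a) * M).
  { apply abs_RInt_le_const; auto. intros t Ht.
    eapply Rle_trans; [apply Rabs_snd_le_Cmod | auto]. }
  lra.
Qed.

Lemma CRInt_derive (h dh : R -> C) (a b : R) : a <= b ->
  (forall x, a <= x <= b -> is_CR_derive h x (dh x)) ->
  (forall x, a <= x <= b -> CR_continuous dh x) ->
  CRInt dh a b = (h b - h a)%C.
Proof.
  intros Hab HD HC. unfold CRInt, Cminus, Cplus, Copp; simpl.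
  assert (Hin : forall x, Rmin a b <= x <= Rmax a b -> a <= x <= b)
    by (intros x Hx; now rewrite Rmin_left, Rmax_right in Hx by lra).
  f_equal; apply is_RInt_unique.
  - apply (is_RInt_derive (V := R_CompleteNormedModule)
      (fun y => fst (h y)) (fun y => fst (dh y))); intros x Hx.
    + now apply HD, Hin.
    + now apply CR_continuous_filter, HC, Hin.
  - apply (is_RInt_derive (V := R_CompleteNormedModule)
      (fun y => snd (h y)) (fun y => snd (dh y))); intros x Hx.
    + now apply HD, Hin.
    + now apply CR_continuous_filter, HC, Hin.
Qed.

(** * Complex derivatives in epsilon-delta form *)

Definition Ccontinuous (g : C -> C) (z : C) : Prop :=
  forall eps, 0 < eps -> exists del, 0 < del /\
    forall u, Cmod (u - z) < del -> Cmod (g u - g z) < eps.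

Definition Cdiff (g : C -> C) (z0 d : C) : Prop :=
  forall eps, 0 < eps -> exists del, 0 < del /\ forall z, Cmod (z - z0) < del ->
    Cmod (g z - g z0 - d * (z - z0)) <= eps * Cmod (z - z0).

Lemma Cdiff_is_derive (g : C -> C) (z0 d : C) :
  Cdiff g z0 d <-> is_derive (K := C_AbsRing) (V := C_NormedModule) g z0 d.
Proof.
  split.
  - intros H. split; [apply is_linear_scal_l|].
    intros x Hx eps. pose proof (is_filter_lim_locally_unique _ _ Hx). subst x.
    destruct (H eps (cond_pos eps)) as [del [Hdel P]].
    exists (mkposreal del Hdel). intros z Hz.
    unfold norm, minus, plus, opp, scal; simpl. rewrite Cmult_comm. now apply P.
  - intros [_ H] eps Heps.
    destruct (H z0 (fun P HP => HP) (mkposreal eps Heps)) as [e He].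
    exists e; split; [apply cond_pos|]. intros z Hz.
    specialize (He z Hz). unfold norm, minus, plus, opp, scal in He; simpl in He.
    now rewrite Cmult_comm.
Qed.

Lemma ex_derive_Ccontinuous (g : C -> C) (z : C) :
  ex_derive (K := C_AbsRing) (V := C_NormedModule) g z -> Ccontinuous g z.
Proof.
  intros Hd eps Heps.
  assert (He2 : 0 < eps / 2) by lra.
  destruct (ex_derive_continuous g z Hd _ (locally_ball (g z) (mkposreal _ He2)))
    as [del Hdel].
  exists del; split; [apply cond_pos|]. intros u Hu.
  destruct (Hdel u Hu) as [B1 B2].
  change (Rabs (fst (g u) - fst (g z)) < eps / 2) in B1.
  change (Rabs (snd (g u) - snd (g z)) < eps / 2) in B2.
  eapply Rle_lt_trans; [apply Cmod_le_Rabs_sum|]. simpl. unfold Rminus in *. lra.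
Qed.

Lemma ex_derive_Cmod_sub_le (g : C -> C) (z0 : C) : ex_derive g z0 ->
  exists B del, 0 <= B /\ 0 < del /\
    forall z, Cmod (z - z0) < del -> Cmod (g z - g z0) <= B * Cmod (z - z0).
Proof.
  intros [dg Hdg]. apply Cdiff_is_derive in Hdg.
  destruct (Hdg 1 Rlt_0_1) as [del [Hdel P]].
  exists (Cmod dg + 1), del. pose proof (Cmod_ge_0 dg).
  split; [lra|]. split; [exact Hdel|]. intros z Hz.
  pose proof (Cmod_triangle (g z - g z0 - dg * (z - z0)) (dg * (z - z0))) as T.
  replace (g z - g z0 - dg * (z - z0) + dg * (z - z0))%C with (g z - g z0)%C in T by ring.
  rewrite Cmod_mult in T. specialize (P z Hz). lra.
Qed.

(* [C] carries two normed-module structures over itself (the one of [C_NormedModule] and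
   the one it has as an absolute-value ring); they give the same derivatives. *)
Lemma is_derive_C_AbsRing_iff (g : C -> C) (z d : C) :
  is_derive (K := C_AbsRing) (V := C_NormedModule) g z d <->
  is_derive (K := C_AbsRing) (V := AbsRing_NormedModule C_AbsRing) g z d.
Proof. split; intros [_ H]; (split; [apply is_linear_scal_l|]); exact H. Qed.

Lemma is_derive_Cmult (g1 g2 : C -> C) (z d1 d2 : C) :
  is_derive (K := C_AbsRing) (V := C_NormedModule) g1 z d1 ->
  is_derive (K := C_AbsRing) (V := C_NormedModule) g2 z d2 ->
  is_derive (K := C_AbsRing) (V := C_NormedModule) (fun y => g1 y * g2 y)%C z
    (d1 * g2 z + g1 z * d2)%C.
Proof.
  rewrite !is_derive_C_AbsRing_iff. intros H1 H2.
  exact (is_derive_mult _ _ z _ _ H1 H2 Cmult_comm).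
Qed.

Lemma CR_continuous_comp (g : C -> C) (h : R -> C) (x : R) :
  Ccontinuous g (h x) -> CR_continuous h x -> CR_continuous (fun y => g (h y)) x.
Proof.
  intros Hg Hh eps Heps. destruct (Hg eps Heps) as [d [Hd P]].
  destruct (Hh d Hd) as [d' [Hd' P']]. exists d'; split; auto.
Qed.

Lemma Cdiff_inv_sub (w z0 : C) : z0 <> w ->
  Cdiff (fun z => / (z - w))%C z0 (- / ((z0 - w) * (z0 - w)))%C.
Proof.
  intros Hne eps Heps.
  assert (Hw : (z0 - w)%C <> 0%C) by (intros E; apply Hne;
    replace z0 with (z0 - w + w)%C by ring; rewrite E; ring).
  set (r := Cmod (z0 - w)).
  assert (Hr : 0 < r) by now apply Cmod_gt_0.
  exists (Rmin (r / 2) (eps * r ^ 3 / 2)). split.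
  { apply Rmin_pos; [lra|]. apply Rdiv_lt_0_compat; [|lra].
    apply Rmult_lt_0_compat; [auto | now apply pow_lt]. }
  intros z Hz. pose proof (Rmin_l (r / 2) (eps * r ^ 3 / 2)).
  pose proof (Rmin_r (r / 2) (eps * r ^ 3 / 2)).
  assert (Hzw : r / 2 <= Cmod (z - w)).
  { pose proof (Cmod_triangle_inv (z0 - w) (z0 - z)) as T.
    replace (z0 - w - (z0 - z))%C with (z - w)%C in T by ring.
    rewrite (Cmod_minus_sym z0 z) in T. fold r in T. lra. }
  assert (Hzw' : (z - w)%C <> 0%C) by (intro E; rewrite E, Cmod_0 in Hzw; lra).
  replace (/ (z - w) - / (z0 - w) - - / ((z0 - w) * (z0 - w)) * (z - z0))%C
    with ((z - z0) * (z - z0) * / ((z - w) * ((z0 - w) * (z0 - w))))%C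
    by (field; split; auto).
  rewrite Cmod_mult, Cmod_inv by (repeat apply Cmult_neq_0; auto).
  rewrite !Cmod_mult. fold r.
  set (q := Cmod (z - z0)) in *. set (s := Cmod (z - w)) in *.
  assert (Hq : 0 <= q) by apply Cmod_ge_0.
  assert (K : / (s * (r * r)) <= 2 / (r * r * r)).
  { replace (2 / (r * r * r)) with (/ (r / 2 * (r * r))) by (field; lra).
    apply Rinv_le_contravar; [apply Rmult_lt_0_compat; nra | nra]. }
  apply Rle_trans with (q * q * (2 / (r * r * r))).
  { apply Rmult_le_compat_l; [nra | exact K]. }
  replace (q * q * (2 / (r * r * r))) with (q * (2 / (r * r * r)) * q) by ring.
  apply Rmult_le_compat_r; auto.
  apply Rle_trans with ((eps * r ^ 3 / 2) * (2 / (r * r * r))).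
  - apply Rmult_le_compat_r; [apply Rlt_le, Rdiv_lt_0_compat; [lra | nra] | lra].
  - right. field. lra.
Qed.

Lemma Ccontinuous_inv_sub (w z : C) : z <> w -> Ccontinuous (fun u => / (u - w))%C z.
Proof.
  intros Hzw. apply ex_derive_Ccontinuous. eexists.
  apply Cdiff_is_derive, Cdiff_inv_sub, Hzw.
Qed.

(** * Goursat's lemma for a parametrised rectangle *)

Section Goursat.

Variables (G Gs Gt : R -> R -> C) (g : C -> C) (a b c d L : R).
Hypothesis Hab : a < b.
Hypothesis Hcd : c < d.
Hypothesis HL : 0 < L.
Hypothesis HGs : forall s t, is_CR_derive (fun s' => G s' t) s (Gs s t).
Hypothesis HGt : forall s t, is_CR_derive (fun t' => G s t') t (Gt s t).
Hypothesis HCs : forall s t, CR_continuous (fun s' => Gs s' t) s.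
Hypothesis HCt : forall s t, CR_continuous (fun t' => Gt s t') t.

Definition in_rect (s t : R) : Prop := a <= s <= b /\ c <= t <= d.

Hypothesis HLip : forall s t s' t', in_rect s t -> in_rect s' t' ->
  Cmod (G s t - G s' t') <= L * (Rabs (s - s') + Rabs (t - t')).
Hypothesis HBs : forall s t, in_rect s t -> Cmod (Gs s t) <= L.
Hypothesis HBt : forall s t, in_rect s t -> Cmod (Gt s t) <= L.
Hypothesis Hg : forall s t, in_rect s t -> ex_derive g (G s t).

Definition subrect (s1 s2 t1 t2 : R) : Prop :=
  a <= s1 <= s2 /\ s2 <= b /\ c <= t1 <= t2 /\ t2 <= d.

Definition continuous_on_G (h : C -> C) : Prop := forall s t, in_rect s t ->
  CR_continuous (fun s' => h (G s' t)) s /\ CR_continuous (fun t' => h (G s t')) t.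

Definition edge_s (h : C -> C) (t s1 s2 : R) : C := CRInt (fun s => h (G s t) * Gs s t)%C s1 s2.
Definition edge_t (h : C -> C) (s t1 t2 : R) : C := CRInt (fun t => h (G s t) * Gt s t)%C t1 t2.

(* The integral of [h(z) dz] along the image under [G] of the positively oriented
   boundary of [[s1, s2] x [t1, t2]]. *)
Definition rect_contour (h : C -> C) (s1 s2 t1 t2 : R) : C :=
  (edge_s h t1 s1 s2 - edge_s h t2 s1 s2 + (edge_t h s2 t1 t2 - edge_t h s1 t1 t2))%C.

Lemma ex_CRInt_edge_s (h : C -> C) (t s1 s2 : R) : continuous_on_G h ->
  c <= t <= d -> a <= s1 <= s2 -> s2 <= b ->
  ex_CRInt (fun s => h (G s t) * Gs s t)%C s1 s2.
Proof.
  intros Hh Ht H1 H2. apply ex_CRInt_continuous; [lra|].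
  intros x Hx. apply CR_continuous_mult; [apply (Hh x t) | apply HCs]. split; lra.
Qed.

Lemma ex_CRInt_edge_t (h : C -> C) (s t1 t2 : R) : continuous_on_G h ->
  a <= s <= b -> c <= t1 <= t2 -> t2 <= d ->
  ex_CRInt (fun t => h (G s t) * Gt s t)%C t1 t2.
Proof.
  intros Hh Hs H1 H2. apply ex_CRInt_continuous; [lra|].
  intros x Hx. apply CR_continuous_mult; [apply (Hh s x) | apply HCt]. split; lra.
Qed.

Lemma rect_contour_split_s (h : C -> C) (s1 sm s2 t1 t2 : R) : continuous_on_G h ->
  subrect s1 s2 t1 t2 -> s1 <= sm <= s2 ->
  rect_contour h s1 s2 t1 t2 = (rect_contour h s1 sm t1 t2 + rect_contour h sm s2 t1 t2)%C.
Proof.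
  intros Hh (Q1 & Q2 & Q3 & Q4) Hm. unfold rect_contour, edge_s.
  rewrite <- (CRInt_Chasles _ s1 sm s2),
    <- (CRInt_Chasles (fun s => h (G s t2) * Gs s t2)%C s1 sm s2).
  - ring.
  all: apply ex_CRInt_edge_s; auto; lra.
Qed.

Lemma rect_contour_split_t (h : C -> C) (s1 s2 t1 tm t2 : R) : continuous_on_G h ->
  subrect s1 s2 t1 t2 -> t1 <= tm <= t2 ->
  rect_contour h s1 s2 t1 t2 = (rect_contour h s1 s2 t1 tm + rect_contour h s1 s2 tm t2)%C.
Proof.
  intros Hh (Q1 & Q2 & Q3 & Q4) Hm. unfold rect_contour, edge_t.
  rewrite <- (CRInt_Chasles _ t1 tm t2),
    <- (CRInt_Chasles (fun t => h (G s1 t) * Gt s1 t)%C t1 tm t2).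
  - ring.
  all: apply ex_CRInt_edge_t; auto; lra.
Qed.

Lemma rect_contour_minus (h1 h2 : C -> C) (s1 s2 t1 t2 : R) :
  continuous_on_G h1 -> continuous_on_G h2 -> subrect s1 s2 t1 t2 ->
  rect_contour (fun z => h1 z - h2 z)%C s1 s2 t1 t2
  = (rect_contour h1 s1 s2 t1 t2 - rect_contour h2 s1 s2 t1 t2)%C.
Proof.
  intros H1 H2 (Q1 & Q2 & Q3 & Q4).
  assert (Es : forall t, c <= t <= d -> edge_s (fun z => h1 z - h2 z)%C t s1 s2
                                   = (edge_s h1 t s1 s2 - edge_s h2 t s1 s2)%C).
  { intros t Ht. unfold edge_s. rewrite <- CRInt_minus by (apply ex_CRInt_edge_s; auto; lra).
    apply CRInt_ext. intros; ring. }
  assert (Et : forall s, a <= s <= b -> edge_t (fun z => h1 z - h2 z)%C s t1 t2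
                                   = (edge_t h1 s t1 t2 - edge_t h2 s t1 t2)%C).
  { intros s Hs. unfold edge_t. rewrite <- CRInt_minus by (apply ex_CRInt_edge_t; auto; lra).
    apply CRInt_ext. intros; ring. }
  unfold rect_contour. rewrite !Es, !Et by lra. ring.
Qed.

Lemma continuous_on_G_affine (al be : C) : continuous_on_G (fun z => al + be * z)%C.
Proof.
  intros s t _. split; apply CR_continuous_plus, CR_continuous_mult;
    try apply CR_continuous_const; eapply is_CR_derive_continuous; [apply HGs | apply HGt].
Qed.

(* An affine function has the primitive [al z + be z^2 / 2]. *)
Lemma rect_contour_affine (al be : C) (s1 s2 t1 t2 : R) : subrect s1 s2 t1 t2 ->
  rect_contour (fun z => al + be * z)%C s1 s2 t1 t2 = 0%C.
Proof.
  intros (Q1 & Q2 & Q3 & Q4).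
  set (P z := (al * z + be * RtoC (/ 2) * (z * z))%C).
  assert (Es : forall t, c <= t <= d -> edge_s (fun z => al + be * z)%C t s1 s2
                                   = (P (G s2 t) - P (G s1 t))%C).
  { intros t Ht. unfold edge_s. apply (CRInt_derive (fun s => P (G s t))); [lra| |].
    - intros x _. exact (is_CR_derive_affine_primitive al be (fun s => G s t) x _ (HGs x t)).
    - intros x Hx. apply CR_continuous_mult; [apply continuous_on_G_affine | apply HCs].
      split; lra. }
  assert (Et : forall s, a <= s <= b -> edge_t (fun z => al + be * z)%C s t1 t2
                                   = (P (G s t2) - P (G s t1))%C).
  { intros s Hs. unfold edge_t. apply (CRInt_derive (fun t => P (G s t))); [lra| |].
    - intros x _. exact (is_CR_derive_affine_primitive al be (fun t => G s t) x _ (HGt s x)).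
    - intros x Hx. apply CR_continuous_mult; [apply continuous_on_G_affine | apply HCt].
      split; lra. }
  unfold rect_contour. rewrite !Es, !Et by lra. ring.
Qed.

Lemma rect_contour_bound (h : C -> C) (M s1 s2 t1 t2 : R) :
  continuous_on_G h -> subrect s1 s2 t1 t2 ->
  (forall s t, s1 <= s <= s2 -> t1 <= t <= t2 -> Cmod (h (G s t)) <= M) ->
  Cmod (rect_contour h s1 s2 t1 t2) <= 4 * L * M * ((s2 - s1) + (t2 - t1)).
Proof.
  intros Hh (Q1 & Q2 & Q3 & Q4) HM.
  assert (M0 : 0 <= M) by (eapply Rle_trans; [apply Cmod_ge_0 | apply (HM s1 t1); lra]).
  assert (Bs : forall t, t1 <= t <= t2 -> Cmod (edge_s h t s1 s2) <= 2 * (s2 - s1) * (M * L)).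
  { intros t Ht. apply CRInt_norm_le; [lra | apply ex_CRInt_edge_s; auto; lra|].
    intros s Hs. rewrite Cmod_mult.
    apply Rmult_le_compat; try apply Cmod_ge_0; [apply HM | apply HBs; split]; lra. }
  assert (Bt : forall s, s1 <= s <= s2 -> Cmod (edge_t h s t1 t2) <= 2 * (t2 - t1) * (M * L)).
  { intros s Hs. apply CRInt_norm_le; [lra | apply ex_CRInt_edge_t; auto; lra|].
    intros t Ht. rewrite Cmod_mult.
    apply Rmult_le_compat; try apply Cmod_ge_0; [apply HM | apply HBt; split]; lra. }
  unfold rect_contour. eapply Rle_trans; [apply Cmod_triangle4|].
  pose proof (Bs t1 ltac:(lra)); pose proof (Bs t2 ltac:(lra)).
  pose proof (Bt s1 ltac:(lra)); pose proof (Bt s2 ltac:(lra)).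
  lra.
Qed.

Lemma continuous_on_G_g : continuous_on_G g.
Proof.
  intros s t Hst. pose proof (ex_derive_Ccontinuous g _ (Hg s t Hst)) as Hc.
  split; apply (CR_continuous_comp g); auto;
    eapply is_CR_derive_continuous; [apply HGs | apply HGt].
Qed.

Lemma continuous_on_G_minus (h1 h2 : C -> C) :
  continuous_on_G h1 -> continuous_on_G h2 -> continuous_on_G (fun z => h1 z - h2 z)%C.
Proof.
  intros H1 H2 s t Hst. destruct (H1 s t Hst), (H2 s t Hst).
  split; now apply CR_continuous_minus.
Qed.

(* Subtracting the affine approximation of [g] at [G s0 t0], which has zero contour
   integral, leaves an integrand of size [o(|z - G s0 t0|)]. *)
Lemma rect_contour_small (s0 t0 : R) : in_rect s0 t0 -> forall eps, 0 < eps ->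
  exists del, 0 < del /\ forall s1 s2 t1 t2, subrect s1 s2 t1 t2 ->
    s1 <= s0 <= s2 -> t1 <= t0 <= t2 -> (s2 - s1) + (t2 - t1) < del ->
    Cmod (rect_contour g s1 s2 t1 t2) <= eps * ((s2 - s1) + (t2 - t1)) ^ 2.
Proof.
  intros H0 eps Heps.
  destruct (Hg s0 t0 H0) as [dg Hdg]. apply Cdiff_is_derive in Hdg.
  set (z0 := G s0 t0) in Hdg.
  set (al := (g z0 - dg * z0)%C).
  destruct (Hdg (eps / (4 * L * L))) as [dl [Hdl P]]; [apply Rdiv_lt_0_compat; nra|].
  exists (dl / L). split; [now apply Rdiv_lt_0_compat|].
  intros s1 s2 t1 t2 Hsub Hs Ht Hl. pose proof Hsub as (Q1 & Q2 & Q3 & Q4).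
  set (l := (s2 - s1) + (t2 - t1)) in *.
  assert (Hll : L * l < dl).
  { apply (Rmult_lt_reg_r (/ L)); [now apply Rinv_0_lt_compat|].
    replace (L * l * / L) with l by (field; lra). exact Hl. }
  replace (rect_contour g s1 s2 t1 t2)
    with (rect_contour (fun z => g z - (al + dg * z))%C s1 s2 t1 t2).
  2:{ rewrite rect_contour_minus, rect_contour_affine by
        auto using continuous_on_G_g, continuous_on_G_affine. ring. }
  eapply Rle_trans.
  - apply (rect_contour_bound _ (eps / (4 * L * L) * (L * l)));
      auto using continuous_on_G_minus, continuous_on_G_g, continuous_on_G_affine.
    intros s t Hs' Ht'.
    assert (Hz : Cmod (G s t - z0) <= L * l).
    { eapply Rle_trans; [apply HLip; split; lra|].
      apply Rmult_le_compat_l; [lra|].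
      unfold l. apply Rplus_le_compat; apply Rabs_le; lra. }
    replace (g (G s t) - (al + dg * G s t))%C with (g (G s t) - g z0 - dg * (G s t - z0))%C
      by (unfold al; ring).
    eapply Rle_trans; [apply P; lra|].
    apply Rmult_le_compat_l; [apply Rlt_le, Rdiv_lt_0_compat; nra | exact Hz].
  - right. unfold l. field. lra.
Qed.

Record rect := mkrect { rs1 : R; rs2 : R; rt1 : R; rt2 : R }.

Definition rect_ok (Q : rect) : Prop := subrect (rs1 Q) (rs2 Q) (rt1 Q) (rt2 Q).

Definition contour (Q : rect) : C := rect_contour g (rs1 Q) (rs2 Q) (rt1 Q) (rt2 Q).

Definition quarter (left low : bool) (Q : rect) : rect :=
  let sm := (rs1 Q + rs2 Q) / 2 in
  let tm := (rt1 Q + rt2 Q) / 2 in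
  mkrect (if left then rs1 Q else sm) (if left then sm else rs2 Q)
         (if low then rt1 Q else tm) (if low then tm else rt2 Q).

Definition is_quarter_of (P Q : rect) : Prop :=
  rect_ok P /\ rs1 Q <= rs1 P /\ rs2 P <= rs2 Q /\ rt1 Q <= rt1 P /\ rt2 P <= rt2 Q /\
  rs2 P - rs1 P = (rs2 Q - rs1 Q) / 2 /\ rt2 P - rt1 P = (rt2 Q - rt1 Q) / 2.

Lemma quarter_is_quarter_of (left low : bool) (Q : rect) :
  rect_ok Q -> is_quarter_of (quarter left low Q) Q.
Proof.
  destruct Q as [s1 s2 t1 t2], left, low; unfold rect_ok, subrect, is_quarter_of; simpl;
    intros (? & ? & ? & ?); repeat split; simpl; lra.
Qed.

Lemma contour_quarters (Q : rect) : rect_ok Q ->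
  contour Q = (contour (quarter true true Q) + contour (quarter false true Q)
               + (contour (quarter true false Q) + contour (quarter false false Q)))%C.
Proof.
  destruct Q as [s1 s2 t1 t2]. unfold rect_ok, contour, quarter; simpl.
  intros Hs. pose proof Hs as (Q1 & Q2 & Q3 & Q4).
  rewrite (rect_contour_split_t g s1 s2 t1 ((t1 + t2) / 2) t2)
    by (auto using continuous_on_G_g; lra).
  rewrite (rect_contour_split_s g s1 ((s1 + s2) / 2) s2 t1 ((t1 + t2) / 2))
    by (auto using continuous_on_G_g; repeat split; lra).
  rewrite (rect_contour_split_s g s1 ((s1 + s2) / 2) s2 ((t1 + t2) / 2) t2)
    by (auto using continuous_on_G_g; repeat split; lra).
  reflexivity.
Qed.

Definition worst_quarter (Q : rect) : rect :=
  let big P := Rle_dec (Cmod (contour Q) / 4) (Cmod (contour P)) in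
  if big (quarter true true Q) then quarter true true Q else
  if big (quarter false true Q) then quarter false true Q else
  if big (quarter true false Q) then quarter true false Q else quarter false false Q.

Lemma worst_quarter_spec (Q : rect) : rect_ok Q ->
  is_quarter_of (worst_quarter Q) Q /\ Cmod (contour Q) / 4 <= Cmod (contour (worst_quarter Q)).
Proof.
  intros HQ. pose proof (contour_quarters Q HQ) as E.
  unfold worst_quarter.
  repeat (destruct Rle_dec; [split; auto using quarter_is_quarter_of|]).
  split; [auto using quarter_is_quarter_of|].
  set (c1 := contour (quarter true true Q)) in *. set (c2 := contour (quarter false true Q)) in *.
  set (c3 := contour (quarter true false Q)) in *. set (c4 := contour (quarter false false Q)) in *.
  pose proof (Cmod_triangle (c1 + c2) (c3 + c4)).
  pose proof (Cmod_triangle c1 c2); pose proof (Cmod_triangle c3 c4).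
  rewrite <- E in *. lra.
Qed.

Fixpoint nested (n : nat) : rect :=
  match n with O => mkrect a b c d | S n => worst_quarter (nested n) end.

Lemma nested_spec (n : nat) :
  rect_ok (nested n) /\ Cmod (contour (nested 0)) * (/ 4) ^ n <= Cmod (contour (nested n)) /\
  rs2 (nested n) - rs1 (nested n) = (b - a) * (/ 2) ^ n /\
  rt2 (nested n) - rt1 (nested n) = (d - c) * (/ 2) ^ n.
Proof.
  induction n as [|n (S1 & S2 & S3 & S4)].
  - simpl. unfold rect_ok, subrect; simpl. repeat split; lra.
  - set (X := Cmod (contour (nested 0))) in *. simpl nested.
    destruct (worst_quarter_spec (nested n) S1) as ((P1 & _ & _ & _ & _ & P6 & P7) & P8).
    split; [exact P1|]. split; [|split].
    + simpl pow. replace (X * (/ 4 * (/ 4) ^ n)) with (X * (/ 4) ^ n / 4) by field. lra.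
    + rewrite P6, S3. simpl pow. field.
    + rewrite P7, S4. simpl pow. field.
Qed.

Lemma nested_mono (n m : nat) : (n <= m)%nat ->
  rs1 (nested n) <= rs1 (nested m) /\ rs2 (nested m) <= rs2 (nested n) /\
  rt1 (nested n) <= rt1 (nested m) /\ rt2 (nested m) <= rt2 (nested n).
Proof.
  induction 1 as [|m _ IH]; [lra|].
  destruct (nested_spec m) as [S1 _]. simpl nested.
  destruct (worst_quarter_spec (nested m) S1) as ((_ & P2 & P3 & P4 & P5 & _) & _). lra.
Qed.

Lemma nested_cross (n m : nat) :
  rs1 (nested n) <= rs2 (nested m) /\ rt1 (nested n) <= rt2 (nested m).
Proof.
  destruct (nested_mono n (Nat.max n m) (Nat.le_max_l _ _)) as (A1 & _ & A3 & _).
  destruct (nested_mono m (Nat.max n m) (Nat.le_max_r _ _)) as (_ & B2 & _ & B4).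
  destruct (nested_spec (Nat.max n m)) as ((C1 & C2 & C3 & C4) & _). lra.
Qed.

Lemma nested_common_point : exists s0 t0, forall n,
  rs1 (nested n) <= s0 <= rs2 (nested n) /\ rt1 (nested n) <= t0 <= rt2 (nested n).
Proof.
  destruct (completeness (fun x => exists n, x = rs1 (nested n))) as [s0 [Us Ls]].
  { exists b. intros x [n ->]. destruct (nested_cross n 0) as [X _]. exact X. }
  { exists (rs1 (nested 0)), 0%nat. reflexivity. }
  destruct (completeness (fun x => exists n, x = rt1 (nested n))) as [t0 [Ut Lt]].
  { exists d. intros x [n ->]. destruct (nested_cross n 0) as [_ X]. exact X. }
  { exists (rt1 (nested 0)), 0%nat. reflexivity. }
  exists s0, t0. intros n. repeat split.
  - apply Us. now exists n.
  - apply Ls. intros x [k ->]. apply nested_cross.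
  - apply Ut. now exists n.
  - apply Lt. intros x [k ->]. apply nested_cross.
Qed.

(* If the contour integral were nonzero, the nested rectangles would carry at least
   [4^-n] of it, while near their common point it is [o(4^-n)]. *)
Theorem goursat : rect_contour g a b c d = 0%C.
Proof.
  destruct nested_common_point as (s0 & t0 & Hin).
  destruct (Req_dec (Cmod (rect_contour g a b c d)) 0) as [E0|E0]; [now apply Cmod_eq_0|].
  exfalso.
  set (e0 := Cmod (rect_contour g a b c d)) in *.
  assert (He0 : 0 < e0) by (pose proof (Cmod_ge_0 (rect_contour g a b c d)); unfold e0 in *; lra).
  set (l0 := (b - a) + (d - c)).
  assert (Hl0 : 0 < l0) by (unfold l0; lra).
  assert (H0 : in_rect s0 t0) by (destruct (Hin 0%nat) as [? ?]; simpl in *; split; lra).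
  destruct (rect_contour_small s0 t0 H0 (e0 / (2 * l0 ^ 2))) as [del [Hdel P]].
  { apply Rdiv_lt_0_compat; auto. nra. }
  destruct (pow_lt_1_zero (/ 2)) with (y := del / l0) as [N HN].
  { rewrite Rabs_right; lra. }
  { now apply Rdiv_lt_0_compat. }
  specialize (HN N (le_n N)). rewrite Rabs_right in HN by (apply Rle_ge, pow_le; lra).
  destruct (nested_spec N) as (S1 & S2 & S3 & S4).
  assert (Hsize : (rs2 (nested N) - rs1 (nested N)) + (rt2 (nested N) - rt1 (nested N))
                  = l0 * (/ 2) ^ N) by (rewrite S3, S4; unfold l0; ring).
  assert (Hlt : l0 * (/ 2) ^ N < del).
  { apply (Rmult_lt_reg_r (/ l0)); [now apply Rinv_0_lt_compat|].
    replace (l0 * (/ 2) ^ N * / l0) with ((/ 2) ^ N) by (field; lra). exact HN. }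
  destruct (Hin N) as [Hs Ht].
  specialize (P _ _ _ _ S1 Hs Ht ltac:(lra)).
  fold (contour (nested N)) in P. rewrite Hsize in P.
  replace (e0 / (2 * l0 ^ 2) * (l0 * (/ 2) ^ N) ^ 2) with (e0 * (/ 4) ^ N / 2) in P.
  2:{ replace (/ 4) with (/ 2 * / 2) by field. rewrite Rpow_mult_distr. field. lra. }
  change (Cmod (contour (nested 0))) with e0 in S2.
  assert (0 < e0 * (/ 4) ^ N) by (apply Rmult_lt_0_compat; [auto | apply pow_lt; lra]).
  lra.
Qed.

End Goursat.

(** * The Cauchy integral formula on circles *)

Definition cis (t : R) : C := (cos t, sin t).

Lemma Cmod_cis (t : R) : Cmod (cis t) = 1.
Proof.
  unfold Cmod, cis; simpl. pose proof (sin2_cos2 t) as H. unfold Rsqr in H.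
  replace (cos t * (cos t * 1) + sin t * (sin t * 1)) with 1 by nra. apply sqrt_1.
Qed.

Lemma cis_neq_0 (t : R) : cis t <> 0%C.
Proof. intro E. pose proof (Cmod_cis t) as H. rewrite E, Cmod_0 in H. lra. Qed.

Lemma cis_0_2PI : cis (2 * PI) = cis 0.
Proof. unfold cis. now rewrite cos_2PI, sin_2PI, cos_0, sin_0. Qed.

Lemma is_CR_derive_cis (t : R) : is_CR_derive cis t (Ci * cis t).
Proof. split; simpl; auto_derive; auto; ring. Qed.

Lemma CR_continuous_cis (t : R) : CR_continuous cis t.
Proof. eapply is_CR_derive_continuous, is_CR_derive_cis. Qed.

Lemma Rabs_cos_sub_le (x y : R) : Rabs (cos x - cos y) <= Rabs (x - y).
Proof.
  destruct (MVT_gen cos y x (fun u => - sin u)) as [z [_ Hz]].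
  - intros u _. auto_derive; auto. ring.
  - intros u _. apply continuity_cos.
  - rewrite Hz, Rabs_mult, Rabs_Ropp. pose proof (SIN_bound z).
    rewrite <- (Rmult_1_l (Rabs (x - y))) at 2.
    apply Rmult_le_compat_r; [apply Rabs_pos | apply Rabs_le; lra].
Qed.

Lemma Rabs_sin_sub_le (x y : R) : Rabs (sin x - sin y) <= Rabs (x - y).
Proof.
  destruct (MVT_gen sin y x cos) as [z [_ Hz]].
  - intros u _. auto_derive; auto. ring.
  - intros u _. apply continuity_sin.
  - rewrite Hz, Rabs_mult. pose proof (COS_bound z).
    rewrite <- (Rmult_1_l (Rabs (x - y))) at 2.
    apply Rmult_le_compat_r; [apply Rabs_pos | apply Rabs_le; lra].
Qed.

Lemma Cmod_cis_sub_le (t t' : R) : Cmod (cis t - cis t') <= 2 * Rabs (t - t').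
Proof.
  eapply Rle_trans; [apply Cmod_le_Rabs_sum|]. simpl.
  pose proof (Rabs_cos_sub_le t t'); pose proof (Rabs_sin_sub_le t t'). unfold Rminus in *. lra.
Qed.

Definition circle (r t : R) : C := (r * cis t)%C.

Definition cauchy_integrand (f : C -> C) (w z : C) : C := (f z * / (z - w))%C.

Lemma ex_derive_cauchy_integrand (f : C -> C) (w z : C) :
  ex_derive f z -> z <> w -> ex_derive (cauchy_integrand f w) z.
Proof.
  intros [df Hdf] Hzw. eexists. apply is_derive_Cmult; [exact Hdf|].
  apply Cdiff_is_derive, Cdiff_inv_sub, Hzw.
Qed.

(* The annulus between the circle of radius [r0] around [w] ([s = 0]) and the circle of
   radius [r] around [0] ([s = 1]), swept by the segments joining them. *)
Section Annulus.

Variables (f : C -> C) (w : C) (r r0 : R).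
Hypothesis Hf : Hol f.
Hypothesis Hr : r < 1.
Hypothesis Hr0 : 0 < r0.
Hypothesis Hr0w : r0 < r - Cmod w.

Definition radius (s : R) : R := r0 + s * (r - r0).

Definition annulus (s t : R) : C := ((1 - s)%R * w + radius s * cis t)%C.
Definition annulus_ds (s t : R) : C := (- w + (r - r0)%R * cis t)%C.
Definition annulus_dt (s t : R) : C := (radius s * (Ci * cis t))%C.

Lemma radius_bounds (s : R) : 0 <= s <= 1 -> 0 < radius s <= r.
Proof. unfold radius. pose proof (Cmod_ge_0 w). nra. Qed.

Lemma is_CR_derive_annulus_s (s t : R) : is_CR_derive (fun s' => annulus s' t) s (annulus_ds s t).
Proof. split; unfold annulus, annulus_ds, radius, cis; simpl; auto_derive; auto; ring. Qed.

Lemma is_CR_derive_annulus_t (s t : R) : is_CR_derive (fun t' => annulus s t') t (annulus_dt s t).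
Proof. split; unfold annulus, annulus_dt, radius, cis; simpl; auto_derive; auto; ring. Qed.

Lemma CR_continuous_annulus_ds (s t : R) : CR_continuous (fun s' => annulus_ds s' t) s.
Proof. unfold annulus_ds. apply CR_continuous_const. Qed.

Lemma CR_continuous_annulus_dt (s t : R) : CR_continuous (fun t' => annulus_dt s t') t.
Proof.
  apply (is_CR_derive_continuous _ _ (radius s * (Ci * (Ci * cis t)))%C).
  split; unfold annulus_dt, cis; simpl; auto_derive; auto; ring.
Qed.

Lemma annulus_lipschitz (s t s' t' : R) :
  in_rect 0 1 0 (2 * PI) s t -> in_rect 0 1 0 (2 * PI) s' t' ->
  Cmod (annulus s t - annulus s' t') <= 4 * (Rabs (s - s') + Rabs (t - t')).
Proof.
  intros [H1 _] [H3 _]. pose proof (Cmod_ge_0 w). pose proof (radius_bounds s' H3).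
  replace (annulus s t - annulus s' t')%C with
    ((s' - s)%R * w + (((s - s') * (r - r0))%R * cis t + radius s' * (cis t - cis t')))%C
    by (unfold annulus, radius; apply injective_projections; simpl; ring).
  eapply Rle_trans; [apply Cmod_triangle3|].
  rewrite !Cmod_RtoC_mult, Cmod_cis, Rabs_mult, (Rabs_right (r - r0)), (Rabs_right (radius s'))
    by lra.
  rewrite (Rabs_minus_sym s' s).
  pose proof (Cmod_cis_sub_le t t'). pose proof (Rabs_pos (s - s')).
  assert (Rabs (s - s') * Cmod w <= Rabs (s - s')) by nra.
  assert (Rabs (s - s') * (r - r0) * 1 <= Rabs (s - s')) by nra.
  assert (radius s' * Cmod (cis t - cis t') <= 2 * Rabs (t - t'))
    by (apply Rle_trans with (1 * (2 * Rabs (t - t'))); [apply Rmult_le_compat;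
          try apply Cmod_ge_0 | ]; lra).
  pose proof (Rabs_pos (t - t')). lra.
Qed.

Lemma Cmod_annulus_ds_le (s t : R) : in_rect 0 1 0 (2 * PI) s t -> Cmod (annulus_ds s t) <= 4.
Proof.
  intros _. unfold annulus_ds. eapply Rle_trans; [apply Cmod_triangle|].
  pose proof (Cmod_ge_0 w). rewrite Cmod_opp, Cmod_RtoC_mult, Cmod_cis, Rabs_right by lra. lra.
Qed.

Lemma Cmod_annulus_dt_le (s t : R) : in_rect 0 1 0 (2 * PI) s t -> Cmod (annulus_dt s t) <= 4.
Proof.
  intros [Hs _]. unfold annulus_dt. pose proof (radius_bounds s Hs).
  rewrite Cmod_RtoC_mult, Cmod_mult, Cmod_Ci, Cmod_cis, Rabs_right by lra. lra.
Qed.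

Lemma annulus_in_disc (s t : R) : 0 <= s <= 1 -> in_disc (annulus s t).
Proof.
  intros Hs. unfold in_disc, annulus. eapply Rle_lt_trans; [apply Cmod_triangle|].
  pose proof (radius_bounds s Hs). pose proof (Cmod_ge_0 w).
  rewrite !Cmod_RtoC_mult, Cmod_cis, (Rabs_right (1 - s)), (Rabs_right (radius s)) by lra.
  unfold radius in *. nra.
Qed.

Lemma annulus_neq_center (s t : R) : 0 <= s <= 1 -> annulus s t <> w.
Proof.
  intros Hs E. pose proof (radius_bounds s Hs). pose proof (Cmod_ge_0 w).
  pose proof (Cmod_triangle_inv (radius s * cis t) (s * w)) as T.
  replace (radius s * cis t - s * w)%C with (annulus s t - w)%C in T
    by (unfold annulus; apply injective_projections; simpl; ring).
  rewrite E in T. replace (w - w)%C with (RtoC 0) in T by ring.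
  rewrite Cmod_0, !Cmod_RtoC_mult, Cmod_cis, (Rabs_right (radius s)), (Rabs_right s) in T by lra.
  unfold radius in *. nra.
Qed.

(* The two [s]-edges of the contour are the same segment, traversed in opposite
   directions, so only the two circles remain. *)
Lemma circle_integrals_eq :
  CRInt (fun t => cauchy_integrand f w (annulus 1 t) * annulus_dt 1 t)%C 0 (2 * PI) =
  CRInt (fun t => cauchy_integrand f w (annulus 0 t) * annulus_dt 0 t)%C 0 (2 * PI).
Proof.
  pose proof PI_RGT_0.
  assert (E : rect_contour annulus annulus_ds annulus_dt (cauchy_integrand f w) 0 1 0 (2 * PI)
              = 0%C).
  { apply (goursat _ _ _ _ _ _ _ _ 4); try lra.
    - apply is_CR_derive_annulus_s.
    - apply is_CR_derive_annulus_t.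
    - apply CR_continuous_annulus_ds.
    - apply CR_continuous_annulus_dt.
    - apply annulus_lipschitz.
    - apply Cmod_annulus_ds_le.
    - apply Cmod_annulus_dt_le.
    - intros s t [Hs _]. apply ex_derive_cauchy_integrand.
      + apply Hf, annulus_in_disc, Hs.
      + apply annulus_neq_center, Hs. }
  unfold rect_contour, edge_s, edge_t in E.
  assert (Hper : forall s, annulus s (2 * PI) = annulus s 0)
    by (intros; unfold annulus; now rewrite cis_0_2PI).
  assert (Hper' : forall s, annulus_ds s (2 * PI) = annulus_ds s 0)
    by (intros; unfold annulus_ds; now rewrite cis_0_2PI).
  rewrite (CRInt_ext (fun s => cauchy_integrand f w (annulus s (2 * PI)) * annulus_ds s (2 * PI))%C
    (fun s => cauchy_integrand f w (annulus s 0) * annulus_ds s 0)%C) in E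
    by (intros; now rewrite Hper, Hper').
  replace (CRInt (fun t => cauchy_integrand f w (annulus 1 t) * annulus_dt 1 t)%C 0 (2 * PI))
    with (0 + CRInt (fun t => cauchy_integrand f w (annulus 0 t) * annulus_dt 0 t) 0 (2 * PI))%C
    by (rewrite <- E; ring).
  ring.
Qed.

Lemma circle_integral_small_circle :
  CRInt (fun t => cauchy_integrand f w (circle r t) * (r * (Ci * cis t)))%C 0 (2 * PI) =
  CRInt (fun t => Ci * f (w + r0 * cis t))%C 0 (2 * PI).
Proof.
  assert (A1 : forall t, annulus 1 t = circle r t)
    by (intros; unfold annulus, radius, circle; apply injective_projections; simpl; ring).
  assert (D1 : forall t, annulus_dt 1 t = (r * (Ci * cis t))%C)
    by (intros; unfold annulus_dt, radius; now replace (r0 + 1 * (r - r0)) with r by ring).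
  assert (A0 : forall t, annulus 0 t = (w + r0 * cis t)%C)
    by (intros; unfold annulus, radius; apply injective_projections; simpl; ring).
  assert (D0 : forall t, annulus_dt 0 t = (r0 * (Ci * cis t))%C)
    by (intros; unfold annulus_dt, radius; now replace (r0 + 0 * (r - r0)) with r0 by ring).
  rewrite (CRInt_ext _ (fun t => cauchy_integrand f w (annulus 1 t) * annulus_dt 1 t)%C)
    by (intros; now rewrite A1, D1).
  rewrite circle_integrals_eq. apply CRInt_ext. intros t _.
  rewrite A0, D0. unfold cauchy_integrand.
  replace (w + r0 * cis t - w)%C with (r0 * cis t)%C by ring.
  field. split; [apply cis_neq_0 | intro E; apply RtoC_inj in E; lra].
Qed.

End Annulus.

Lemma small_circle_integral_close (f : C -> C) (w : C) (r0 del eps : R) :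
  Hol f -> 0 < r0 < del -> (forall t, in_disc (w + r0 * cis t)) ->
  (forall u, Cmod (u - w) < del -> Cmod (f u - f w) < eps) ->
  Cmod (CRInt (fun t => Ci * f (w + r0 * cis t))%C 0 (2 * PI) - (2 * PI)%R * (Ci * f w))
  <= 4 * PI * eps.
Proof.
  intros Hf Hr0 Hin Hcont. pose proof PI_RGT_0.
  assert (Ex1 : ex_CRInt (fun t => Ci * f (w + r0 * cis t))%C 0 (2 * PI)).
  { apply ex_CRInt_continuous; [lra|]. intros t _.
    apply CR_continuous_mult; [apply CR_continuous_const|].
    apply (CR_continuous_comp f (fun t => w + r0 * cis t)%C).
    - apply ex_derive_Ccontinuous, Hf, Hin.
    - apply CR_continuous_plus; [apply CR_continuous_const|].
      apply CR_continuous_mult; [apply CR_continuous_const | apply CR_continuous_cis]. }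
  assert (Ex2 : ex_CRInt (fun _ => Ci * f w)%C 0 (2 * PI))
    by (apply ex_CRInt_continuous; [lra | intros; apply CR_continuous_const]).
  replace ((2 * PI)%R * (Ci * f w))%C with (CRInt (fun _ => Ci * f w)%C 0 (2 * PI))
    by (rewrite CRInt_const; f_equal; f_equal; ring).
  rewrite <- CRInt_minus by auto.
  replace (4 * PI * eps) with (2 * (2 * PI - 0) * eps) by ring.
  apply CRInt_norm_le; [lra | now apply ex_CRInt_minus|]. intros t _.
  replace (Ci * f (w + r0 * cis t) - Ci * f w)%C with (Ci * (f (w + r0 * cis t) - f w))%C by ring.
  rewrite Cmod_mult, Cmod_Ci, Rmult_1_l. apply Rlt_le, Hcont.
  replace (w + r0 * cis t - w)%C with (r0 * cis t)%C by ring.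
  rewrite Cmod_RtoC_mult, Cmod_cis, Rabs_right by lra. lra.
Qed.

(* Shrink the small circle: the right-hand side of [circle_integral_small_circle] does not
   depend on [r0] and tends to [2 pi i f(w)] by continuity of [f] at [w]. *)
Theorem cauchy_integral_formula (f : C -> C) (w : C) (r : R) :
  Hol f -> r < 1 -> Cmod w < r ->
  CRInt (fun t => cauchy_integrand f w (circle r t) * (r * (Ci * cis t)))%C 0 (2 * PI)
  = ((2 * PI)%R * (Ci * f w))%C.
Proof.
  intros Hf Hr Hw. pose proof PI_RGT_0. pose proof (Cmod_ge_0 w).
  apply Ceq_of_Cmod_sub_le. intros eps Heps.
  destruct (ex_derive_Ccontinuous f w (Hf w ltac:(unfold in_disc; lra)) (eps / (4 * PI)))
    as [del [Hdel Pd]]; [apply Rdiv_lt_0_compat; lra|].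
  set (r0 := Rmin (del / 2) ((r - Cmod w) / 2)).
  assert (R1 : 0 < r0) by (apply Rmin_pos; lra).
  assert (R2 : r0 < r - Cmod w)
    by (pose proof (Rmin_r (del / 2) ((r - Cmod w) / 2)); unfold r0; lra).
  assert (R3 : r0 < del) by (pose proof (Rmin_l (del / 2) ((r - Cmod w) / 2)); unfold r0; lra).
  rewrite (circle_integral_small_circle f w r r0 Hf Hr R1 R2).
  replace eps with (4 * PI * (eps / (4 * PI))) by (field; lra).
  apply (small_circle_integral_close f w r0 del); auto.
  intros t. unfold in_disc. eapply Rle_lt_trans; [apply Cmod_triangle|].
  rewrite Cmod_RtoC_mult, Cmod_cis, Rabs_right by lra. lra.
Qed.

(** * Taylor expansion of a holomorphic function *)

Section Taylor.

Variables (f : C -> C) (r : R).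
Hypothesis Hf : Hol f.
Hypothesis Hr : 0 < r.
Hypothesis Hr1 : r < 1.

Lemma Cmod_circle (t : R) : Cmod (circle r t) = r.
Proof. unfold circle. rewrite Cmod_RtoC_mult, Cmod_cis, Rabs_right by lra. ring. Qed.

Lemma circle_neq_0 (t : R) : circle r t <> 0%C.
Proof. intro E. pose proof (Cmod_circle t) as H. rewrite E, Cmod_0 in H. lra. Qed.

Lemma CR_continuous_circle (t : R) : CR_continuous (circle r) t.
Proof.
  apply CR_continuous_mult; [apply CR_continuous_const | apply CR_continuous_cis].
Qed.

Lemma CR_continuous_inv_circle (t : R) : CR_continuous (fun t => / circle r t)%C t.
Proof.
  apply (CR_continuous_ext (fun t => / (circle r t - 0))%C); [intros; f_equal; ring|].
  apply (CR_continuous_comp (fun z => / (z - 0))%C (circle r)).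
  - apply Ccontinuous_inv_sub, circle_neq_0.
  - apply CR_continuous_circle.
Qed.

Lemma CR_continuous_f_circle (t : R) : CR_continuous (fun t => f (circle r t)) t.
Proof.
  apply (CR_continuous_comp f (circle r)); [|apply CR_continuous_circle].
  apply ex_derive_Ccontinuous, Hf. unfold in_disc. rewrite Cmod_circle. lra.
Qed.

Definition coef_integrand (n : nat) (t : R) : C :=
  (Ci * (f (circle r t) * (/ circle r t) ^ n))%C.

Lemma ex_CRInt_coef_integrand (n : nat) : ex_CRInt (coef_integrand n) 0 (2 * PI).
Proof.
  pose proof PI_RGT_0. apply ex_CRInt_continuous; [lra|]. intros t _. unfold coef_integrand.
  apply CR_continuous_mult; [apply CR_continuous_const|].
  apply CR_continuous_mult; [apply CR_continuous_f_circle|].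
  apply CR_continuous_pow, CR_continuous_inv_circle.
Qed.

Section Remainder.

Variable w : C.
Hypothesis Hw : Cmod w <= r / 2.

Lemma circle_sub_neq_0 (t : R) : (circle r t - w)%C <> 0%C.
Proof.
  intro E. pose proof (Cmod_triangle_inv (circle r t) w) as T.
  rewrite E, Cmod_0, Cmod_circle in T. lra.
Qed.

Definition remainder_integrand (N : nat) (t : R) : C :=
  (Ci * (f (circle r t) * ((w * / circle r t) ^ S N * (circle r t * / (circle r t - w)))))%C.

(* The geometric expansion [1 / (z - w) = sum_n w^n / z^(n+1)] on the circle. *)
Lemma cauchy_integrand_expansion (N : nat) (t : R) :
  (cauchy_integrand f w (circle r t) * (r * (Ci * cis t)))%C =
  (sum_n (fun n => w ^ n * coef_integrand n t) N + remainder_integrand N t)%C.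
Proof.
  pose proof (circle_neq_0 t) as H1. pose proof (circle_sub_neq_0 t) as H2.
  replace (r * (Ci * cis t))%C with (Ci * circle r t)%C by (unfold circle; ring).
  induction N as [|N IH].
  - rewrite sum_O. unfold cauchy_integrand, coef_integrand, remainder_integrand. simpl.
    field. auto.
  - rewrite IH, sum_Sn. unfold coef_integrand, remainder_integrand.
    change plus with Cplus. rewrite !Cpow_mult_l. simpl.
    set (P := (w ^ N)%C). set (Q := ((/ circle r t) ^ N)%C). field. auto.
Qed.

Lemma ex_CRInt_remainder_integrand (N : nat) : ex_CRInt (remainder_integrand N) 0 (2 * PI).
Proof.
  pose proof PI_RGT_0. apply ex_CRInt_continuous; [lra|]. intros t _.
  unfold remainder_integrand.
  apply CR_continuous_mult; [apply CR_continuous_const|].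
  apply CR_continuous_mult; [apply CR_continuous_f_circle|].
  apply CR_continuous_mult.
  - apply CR_continuous_pow, CR_continuous_mult;
      [apply CR_continuous_const | apply CR_continuous_inv_circle].
  - apply CR_continuous_mult; [apply CR_continuous_circle|].
    apply (CR_continuous_comp (fun z => / (z - w))%C (circle r)); [|apply CR_continuous_circle].
    apply Ccontinuous_inv_sub. intro E. apply (circle_sub_neq_0 t). rewrite E. ring.
Qed.

Lemma Cmod_remainder_integrand_le (N : nat) (M t : R) :
  (forall t, 0 <= t <= 2 * PI -> Cmod (f (circle r t)) <= M) -> 0 <= t <= 2 * PI ->
  Cmod (remainder_integrand N t) <= M * (Cmod w / r) ^ S N * 2.
Proof.
  intros HM Ht. pose proof (circle_neq_0 t). pose proof (circle_sub_neq_0 t).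
  unfold remainder_integrand.
  rewrite !Cmod_mult, Cmod_Ci, Cmod_pow, Cmod_mult, !Cmod_inv, Cmod_circle by auto.
  pose proof (Cmod_triangle_inv (circle r t) w) as T. rewrite Cmod_circle in T.
  pose proof (Cmod_ge_0 w). pose proof (HM t Ht). pose proof (Cmod_ge_0 (f (circle r t))).
  assert (A1 : r * / Cmod (circle r t - w) <= 2).
  { apply (Rmult_le_reg_r (Cmod (circle r t - w))); [lra|].
    rewrite Rmult_assoc, Rinv_l by lra. lra. }
  assert (A2 : 0 <= (Cmod w * / r) ^ S N)
    by (apply pow_le, Rmult_le_pos; [lra | apply Rlt_le, Rinv_0_lt_compat; lra]).
  assert (A3 : 0 <= r * / Cmod (circle r t - w))
    by (apply Rmult_le_pos; [lra | apply Rlt_le, Rinv_0_lt_compat; lra]).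
  rewrite Rmult_1_l. unfold Rdiv. rewrite Rmult_assoc.
  apply Rmult_le_compat; auto; [apply Rmult_le_pos; auto | apply Rmult_le_compat_l; auto].
Qed.

Lemma taylor_remainder_eq (N : nat) :
  (f w - sum_n (fun n => CRInt (coef_integrand n) 0 (2 * PI) * / ((2 * PI)%R * Ci) * w ^ n) N)%C
  = (CRInt (remainder_integrand N) 0 (2 * PI) * / ((2 * PI)%R * Ci))%C.
Proof.
  pose proof PI_RGT_0. pose proof (Cmod_ge_0 w).
  pose proof (cauchy_integral_formula f w r Hf Hr1 ltac:(lra)) as E.
  rewrite (CRInt_ext _ (fun t => sum_n (fun n => w ^ n * coef_integrand n t) N
                                 + remainder_integrand N t)%C) in E
    by (intros; apply cauchy_integrand_expansion).
  assert (Exc : forall n, ex_CRInt (fun t => w ^ n * coef_integrand n t)%C 0 (2 * PI))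
    by (intros; apply ex_CRInt_scal, ex_CRInt_coef_integrand).
  rewrite CRInt_plus, CRInt_sum_n in E
    by auto using ex_CRInt_sum_n, ex_CRInt_remainder_integrand.
  rewrite (sum_n_ext _ (fun n => w ^ n * CRInt (coef_integrand n) 0 (2 * PI))%C) in E
    by (intros; apply CRInt_scal, ex_CRInt_coef_integrand).
  set (P := sum_n (fun n => w ^ n * CRInt (coef_integrand n) 0 (2 * PI))%C N) in E.
  replace (sum_n (fun n => CRInt (coef_integrand n) 0 (2 * PI) * / ((2 * PI)%R * Ci) * w ^ n)%C N)
    with (P * / ((2 * PI)%R * Ci))%C.
  2:{ unfold P. rewrite <- (sum_n_mult_r (K := C_Ring)). apply sum_n_ext. intros n.
      change (@eq C (w ^ n * CRInt (coef_integrand n) 0 (2 * PI) * / ((2 * PI)%R * Ci))%C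
                    (CRInt (coef_integrand n) 0 (2 * PI) * / ((2 * PI)%R * Ci) * w ^ n)%C).
      ring. }
  assert (H2PI : RtoC (2 * PI) <> 0%C) by (intro Z; apply RtoC_inj in Z; lra).
  assert (HCi : Ci <> 0%C) by (intro Z; apply (f_equal snd) in Z; simpl in Z; lra).
  replace (f w) with ((2 * PI)%R * (Ci * f w) * / ((2 * PI)%R * Ci))%C by (field; auto).
  rewrite <- E. field. auto.
Qed.

Lemma Cmod_CRInt_remainder_le (N : nat) (M : R) :
  (forall t, 0 <= t <= 2 * PI -> Cmod (f (circle r t)) <= M) ->
  Cmod (CRInt (remainder_integrand N) 0 (2 * PI)) <= 8 * PI * M * (Cmod w / r) ^ S N.
Proof.
  intros HM. pose proof PI_RGT_0.
  replace (8 * PI * M * (Cmod w / r) ^ S N) with (2 * (2 * PI - 0) * (M * (Cmod w / r) ^ S N * 2))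
    by ring.
  apply CRInt_norm_le; [lra | apply ex_CRInt_remainder_integrand|].
  intros t Ht. now apply Cmod_remainder_integrand_le.
Qed.

End Remainder.

End Taylor.

(* The coefficients are [a_n = (2 pi i)^-1 \int f(z) z^(-n-1) dz] over the circle of radius
   [r]; the remainder of the geometric expansion is [O(|w|^(N+1))] for [|w| <= r/2]. *)
Theorem taylor_expansion (f : C -> C) (r : R) : Hol f -> 0 < r < 1 ->
  exists A : nat -> C, forall N, exists K : R, forall w, Cmod w <= r / 2 ->
    Cmod (f w - sum_n (fun n => A n * w ^ n)%C N) <= K * Cmod w ^ S N.
Proof.
  intros Hf [Hr Hr1]. pose proof PI_RGT_0.
  destruct (continuity_ab_maj (fun t => Cmod (f (circle r t))) 0 (2 * PI)) as [t0 [Ht0 _]];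
    [lra | intros t _; apply CR_continuous_Cmod, CR_continuous_f_circle; auto|].
  set (M := Cmod (f (circle r t0))) in *.
  exists (fun n => CRInt (coef_integrand f r n) 0 (2 * PI) * / ((2 * PI)%R * Ci))%C.
  intros N. exists (4 * M / r ^ S N). intros w Hw.
  assert (HD : ((2 * PI)%R * Ci)%C <> 0%C) by (intro E; apply (f_equal snd) in E; simpl in E; lra).
  rewrite (taylor_remainder_eq f r Hf Hr Hr1 w Hw N), Cmod_mult, (Cmod_inv _ HD), Cmod_mult,
    Cmod_Ci, Cmod_R, Rabs_right, Rmult_1_r by lra.
  pose proof (Cmod_CRInt_remainder_le f r Hf Hr Hr1 w Hw N M Ht0) as B.
  replace ((Cmod w / r) ^ S N) with (Cmod w ^ S N / r ^ S N) in B
    by (unfold Rdiv; rewrite Rpow_mult_distr, pow_inv; reflexivity).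
  apply (Rmult_le_reg_r (2 * PI)); [lra|].
  rewrite Rmult_assoc, Rinv_l, Rmult_1_r by lra.
  eapply Rle_trans; [exact B|]. right. field. apply pow_nonzero. lra.
Qed.

(** * The functional equation has no holomorphic solution *)

Lemma sum_n_vanishing_prefix (a : nat -> C) (j : nat) :
  (forall i, (i < j)%nat -> a i = 0%C) -> sum_n a j = a j.
Proof.
  intros H. destruct j as [|j]; [apply sum_O|].
  assert (Z : forall N, (N <= j)%nat -> sum_n a N = RtoC 0).
  { induction N as [|N IH]; intros HN.
    - rewrite sum_O. apply H. lia.
    - rewrite sum_Sn, IH, H by lia. exact (plus_zero_l _). }
  rewrite sum_Sn, Z by lia. exact (plus_zero_l _).
Qed.

Lemma pow_le_of_le_1 (x : R) (n m : nat) : 0 <= x <= 1 -> (n <= m)%nat -> x ^ m <= x ^ n.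
Proof.
  intros Hx Hnm. induction Hnm as [|m _ IH]; [lra|]. simpl.
  assert (0 <= x ^ m) by (apply pow_le; lra). nra.
Qed.

Lemma Rle_0_of_mult_pow_le (a K x0 : R) (j : nat) : 0 < x0 ->
  (forall x, 0 < x <= x0 -> a * x ^ j <= K * x ^ S j) -> a <= 0.
Proof.
  intros Hx0 H. apply Rnot_lt_le. intros Ha. pose proof (Rabs_pos K).
  set (x := Rmin x0 (a / (2 * (Rabs K + 1)))).
  assert (Hx : 0 < x) by (apply Rmin_pos; [lra | apply Rdiv_lt_0_compat; lra]).
  assert (Hx1 : x <= a / (2 * (Rabs K + 1))) by apply Rmin_r.
  specialize (H x (conj Hx (Rmin_l _ _))).
  assert (Hxj : 0 < x ^ j) by now apply pow_lt.
  assert (Hax : a <= K * x).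
  { apply (Rmult_le_reg_r (x ^ j)); [exact Hxj|]. simpl in H. lra. }
  assert (K * x <= Rabs K * x) by (apply Rmult_le_compat_r; [lra | apply Rle_abs]).
  assert (Rabs K * x <= (Rabs K + 1) * (a / (2 * (Rabs K + 1)))) by (apply Rmult_le_compat; lra).
  replace ((Rabs K + 1) * (a / (2 * (Rabs K + 1)))) with (a / 2) in * by (field; lra).
  lra.
Qed.

Lemma Cpow_neq_of_Cpow_sub_neq_1 (beta : C) (j k : nat) : Cmod beta = 1 -> (j <= k)%nat ->
  (beta ^ (k - j))%C <> 1%C -> (beta ^ k)%C <> (beta ^ j)%C.
Proof.
  intros Hb Hjk Hne Heq. apply Hne.
  assert (Hbj : (beta ^ j)%C <> 0%C).
  { intro Z. pose proof (Cmod_pow beta j) as P. rewrite Z, Cmod_0, Hb, pow1 in P. lra. }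
  replace k with ((k - j) + j)%nat in Heq by lia. rewrite Cpow_add_r in Heq.
  replace (beta ^ (k - j))%C with (beta ^ (k - j) * beta ^ j * / beta ^ j)%C by (field; auto).
  rewrite Heq. field. auto.
Qed.

Section FunctionalEquation.

Variables (m f : C -> C) (beta : C) (k : nat) (A : nat -> C) (rho : R).
Hypothesis Hm : Hol m.
Hypothesis Hm0 : m 0 <> 0%C.
Hypothesis Hb : Cmod beta = 1.
Hypothesis Hbk : forall j, (j < k)%nat -> (beta ^ k)%C <> (beta ^ j)%C.
Hypothesis Hrho : 0 < rho.
Hypothesis HT : forall N, exists K, forall w, Cmod w <= rho ->
  Cmod (f w - sum_n (fun n => A n * w ^ n)%C N) <= K * Cmod w ^ S N.
Hypothesis HE : forall z, in_disc z -> (beta ^ k * m 0 * f z - Top m beta f z)%C = e k z.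

Lemma leading_term (j : nat) : (forall i, (i < j)%nat -> A i = 0%C) ->
  exists B, 0 <= B /\ forall w, Cmod w <= rho -> Cmod (f w - A j * w ^ j) <= B * Cmod w ^ S j.
Proof.
  intros Hz. destruct (HT j) as [K HK]. exists (Rabs K). split; [apply Rabs_pos|].
  intros w Hw. specialize (HK w Hw).
  rewrite (sum_n_vanishing_prefix (fun n => A n * w ^ n)%C j) in HK
    by (intros i Hi; rewrite Hz by exact Hi; ring).
  eapply Rle_trans; [exact HK|].
  apply Rmult_le_compat_r; [apply pow_le, Cmod_ge_0 | apply Rle_abs].
Qed.

Lemma functional_equation_bound (j : nat) : (forall i, (i < j)%nat -> A i = 0%C) ->
  exists K x0, 0 < x0 /\ forall x, 0 < x <= x0 ->
    Cmod (m 0 * A j * (beta ^ k - beta ^ j) * x ^ j - x ^ k) <= K * x ^ S j.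
Proof.
  intros Hz. destruct (leading_term j Hz) as [B [HB P]].
  destruct (ex_derive_Cmod_sub_le m 0 (Hm 0 ltac:(unfold in_disc; rewrite Cmod_0; lra)))
    as [Bm [del [HBm [Hdel Pm]]]].
  set (c0 := m 0).
  exists (Cmod c0 * B + (Cmod c0 + Bm) * B + Bm * Cmod (A j)), (Rmin rho (Rmin (/ 2) (del / 2))).
  split; [repeat apply Rmin_pos; lra|].
  intros x [Hx0 Hx1].
  assert (x <= rho /\ x <= / 2 /\ x <= del / 2) as (Hxr & Hx2 & Hxd)
    by (repeat split; eapply Rle_trans; eauto using Rmin_l, Rmin_r, Rle_trans).
  assert (Hw : Cmod x = x) by (rewrite Cmod_R, Rabs_right; lra).
  assert (Hbw : Cmod (beta * x) = x) by (rewrite Cmod_mult, Hb, Hw; ring).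
  pose proof (HE x ltac:(unfold in_disc; lra)) as E. unfold Top, e in E.
  pose proof (P x ltac:(lra)) as Pw. pose proof (P (beta * x)%C ltac:(lra)) as Pbw.
  rewrite Hw in Pw. rewrite Hbw in Pbw.
  assert (Hx0' : Cmod (x - 0) = x) by (replace (RtoC x - 0)%C with (RtoC x) by ring; exact Hw).
  pose proof (Pm x ltac:(rewrite Hx0'; lra)) as Mw. rewrite Hx0' in Mw. fold c0 in Mw.
  set (Sw := (f x - A j * x ^ j)%C) in *.
  set (Sbw := (f (beta * x) - A j * (beta * x) ^ j)%C) in *.
  replace (c0 * A j * (beta ^ k - beta ^ j) * x ^ j - x ^ k)%C
    with (- (beta ^ k * c0 * Sw) + (m x * Sbw + (m x - c0) * (A j * (beta ^ j * x ^ j))))%C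
    by (rewrite <- E; unfold Sw, Sbw; rewrite Cpow_mult_l; fold c0; ring).
  eapply Rle_trans; [apply Cmod_triangle3|].
  rewrite Cmod_opp, !Cmod_mult, !Cmod_pow, Hb, Hw, !pow1, !Rmult_1_l.
  assert (Hmw : Cmod (m x) <= Cmod c0 + Bm).
  { pose proof (Cmod_triangle_inv (m x) c0).
    assert (Bm * x <= Bm * 1) by (apply Rmult_le_compat_l; lra). lra. }
  pose proof (Cmod_ge_0 c0); pose proof (Cmod_ge_0 (A j)); pose proof (Cmod_ge_0 (m x)).
  pose proof (Cmod_ge_0 Sw); pose proof (Cmod_ge_0 Sbw); pose proof (Cmod_ge_0 (m x - c0)).
  assert (Hxj : 0 <= x ^ j) by (apply pow_le; lra).
  assert (T1 : Cmod c0 * Cmod Sw <= Cmod c0 * B * x ^ S j)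
    by (rewrite Rmult_assoc; apply Rmult_le_compat_l; auto).
  assert (T2 : Cmod (m x) * Cmod Sbw <= (Cmod c0 + Bm) * B * x ^ S j)
    by (rewrite Rmult_assoc; apply Rmult_le_compat; auto).
  assert (T3 : Cmod (m x - c0) * (Cmod (A j) * x ^ j) <= Bm * Cmod (A j) * x ^ S j).
  { simpl pow. replace (Bm * Cmod (A j) * (x * x ^ j)) with ((Bm * x) * (Cmod (A j) * x ^ j))
      by ring.
    apply Rmult_le_compat_r; auto. apply Rmult_le_pos; auto. }
  lra.
Qed.

Lemma taylor_coefficients_vanish (j : nat) : (j <= k)%nat -> forall i, (i < j)%nat -> A i = 0%C.
Proof.
  induction j as [|j IH]; intros Hj i Hi; [lia|].
  assert (Hz : forall i, (i < j)%nat -> A i = 0%C) by (apply IH; lia).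
  destruct (Nat.eq_dec i j) as [->|Hne]; [|apply Hz; lia].
  destruct (functional_equation_bound j Hz) as [K [x0 [Hx0 P]]].
  set (a := Cmod (m 0 * A j * (beta ^ k - beta ^ j))).
  assert (Ha : a <= 0).
  { apply (Rle_0_of_mult_pow_le a (K + 1) (Rmin x0 1) j); [apply Rmin_pos; lra|].
    intros x [H1 H2]. pose proof (Rmin_l x0 1); pose proof (Rmin_r x0 1).
    specialize (P x ltac:(lra)).
    pose proof (Cmod_triangle_inv (m 0 * A j * (beta ^ k - beta ^ j) * x ^ j) (x ^ k)) as T.
    rewrite Cmod_mult, !Cmod_RtoC_pow in T by lra. fold a in T.
    assert (x ^ k <= x ^ S j) by (apply pow_le_of_le_1; [lra | lia]).
    simpl pow in *. lra. }
  assert (Z : (m 0 * A j * (beta ^ k - beta ^ j))%C = 0%C)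
    by (apply Cmod_eq_0, Rle_antisym; [exact Ha | apply Cmod_ge_0]).
  assert (Hdiff : (beta ^ k - beta ^ j)%C <> 0%C).
  { intro E. apply (Hbk j); [lia|].
    replace (beta ^ k)%C with (beta ^ k - beta ^ j + beta ^ j)%C by ring. rewrite E. ring. }
  destruct (Req_dec (Cmod (A j)) 0) as [E|E]; [now apply Cmod_eq_0|].
  exfalso. refine (Cmult_neq_0 _ _ (Cmult_neq_0 _ _ Hm0 _) Hdiff Z).
  intro E'. rewrite E', Cmod_0 in E. lra.
Qed.

Lemma functional_equation_absurd : False.
Proof.
  destruct (functional_equation_bound k (taylor_coefficients_vanish k (le_n k)))
    as [K [x0 [Hx0 P]]].
  assert (H1 : 1 <= 0).
  { apply (Rle_0_of_mult_pow_le 1 K (Rmin x0 1) k); [apply Rmin_pos; lra|].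
    intros x [H1 H2]. pose proof (Rmin_l x0 1); pose proof (Rmin_r x0 1).
    specialize (P x ltac:(lra)).
    replace (m 0 * A k * (beta ^ k - beta ^ k) * x ^ k - x ^ k)%C with (- x ^ k)%C in P by ring.
    rewrite Cmod_opp, Cmod_RtoC_pow in P by lra. lra. }
  lra.
Qed.

End FunctionalEquation.

Open Scope C_scope.

Theorem lemma2p5 (m : C -> C) (beta : C) (n : nat) :
  Hol m -> m 0 <> 0 -> Cmod beta = 1%R ->
  (forall k : nat, (1 <= k <= n)%nat -> Cpow beta k <> 1) ->
  forall k : nat, (1 <= k <= n)%nat ->
    ~ (exists f : C -> C, Hol f /\
         forall z : C, in_disc z ->
           Cpow beta k * m 0 * f z - Top m beta f z = e k z).
Proof.
  intros Hm Hm0 Hb Hbn k Hk [f [Hf E]].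
  destruct (taylor_expansion f (/ 2) Hf ltac:(lra)) as [A HT].
  apply (functional_equation_absurd m f beta k A (/ 2 / 2)); auto; [|lra].
  intros j Hj. apply Cpow_neq_of_Cpow_sub_neq_1; [exact Hb | lia | apply Hbn; lia].
Qed.
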